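(* Let $n$ be even, $V=V_1\sqcup V_2$ with $|V_1|=|V_2|=n/2$, and $0\le q<p\le 1$. Consider the complete weighted graph on $V$ with $w(u,v)=p$ for distinct $u,v$ in the same block, $w(u,v)=q$ for $u,v$ in different blocks, and $w(v,v)=0$. Let $\mathcal P$ be the set of all cuts $\{A,A^\complement\}$ with $A\subseteq V$, with cost $c(\{A,A^\complement\})=\sum_{u\in A,v\in A^\complement}w(u,v)$, and for $\Psi\in\mathbb R$ let $\mathcal P_\Psi=\{P\in\mathcal P: c(P)\le\Psi\}$. If the agreement parameter satisfies $a\ge2$ and $p<2q$, then for every $\Psi\in\mathbb R$ there exists at most one $\mathcal P_\Psi$-tangle.
   Context: An orientation of a set of cuts chooses one side of every cut in it. An orientation $O$ of $\mathcal P_\Psi$ is a $\mathcal P_\Psi$-tangle if for all (not necessarily distinct) chosen sides $A,B,C\in O$ we have $|A\cap B\cap C|\ge a$, where $a\in\mathbb N$ is the agreement parameter. *)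

From mathcomp Require Import all_boot all_order all_algebra.
Set Implicit Arguments. Unset Strict Implicit. Unset Printing Implicit Defensive.
Import Order.TTheory GRing.Theory Num.Theory.
Local Open Scope ring_scope.

(* Two-block weights: vertices of T, block V1 and its complement V2 := ~: V1. *)
Definition sbm_weight (R : realFieldType) (T : finType) (V1 : {set T}) (p q : R)
  (u v : T) : R :=
  if u == v then 0 else if (u \in V1) == (v \in V1) then p else q.

Definition cut_cost (R : realFieldType) (T : finType) (w : T -> T -> R)
  (A : {set T}) : R :=
  \sum_(u in A) \sum_(v in ~: A) w u v.

(* An orientation of P_Psi = {cuts {A, ~:A} with cost <= Psi}, given as the set
   O of chosen sides: every chosen side belongs to a cut in P_Psi, every cut in
   P_Psi has at least one chosen side, and no cut has two distinct chosen sides. *)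
Definition is_orientation (R : realFieldType) (T : finType) (w : T -> T -> R)
  (Psi : R) (O : {set {set T}}) : Prop :=
  [/\ forall A, A \in O -> cut_cost w A <= Psi,
      forall A, cut_cost w A <= Psi -> (A \in O) || (~: A \in O)
    & forall A, A \in O -> ~: A \in O -> A = ~: A].

Definition is_tangle (R : realFieldType) (T : finType) (w : T -> T -> R)
  (Psi : R) (a : nat) (O : {set {set T}}) : Prop :=
  is_orientation w Psi O /\
  forall A B C, A \in O -> B \in O -> C \in O -> (a <= #|A :&: B :&: C|)%N.

From mathcomp Require Import all_boot all_order all_algebra.
From mathcomp Require Import ring lra zify.
Set Implicit Arguments.
Unset Strict Implicit.
Unset Printing Implicit Defensive.
Import Order.TTheory GRing.Theory Num.Theory.
Local Open Scope ring_scope.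

(* Cutting d vertices out of one block of size m costs
   g(d) = d (p (m - d) + q m), and p < 2 q gives g(j) <= g(k) whenever
   2 j <= k <= m.  A side D inside one block is covered by two halves and one
   leftover vertex; both halves are cheaper than D, and a tangle containing D
   must contain one of them, since three sides meeting in at most one vertex
   violate a >= 2.  By induction on |D|, no tangle contains such a side.
   For an arbitrary cut {A, ~A}, either both block parts of A or both block
   parts of ~A are at most as expensive as the cut, so that side lies in no
   tangle.  Hence no two tangles orient a cut differently. *)

Lemma tangle_card_ge (R : realFieldType) (T : finType) (w : T -> T -> R)
    Psi a O A :
  is_tangle w Psi a O -> A \in O -> (a <= #|A|)%N.
Proof.
by move=> [_ agree] AO; have := agree _ _ _ AO AO AO; rewrite !setIid.
Qed.

Lemma tangle_cover (R : realFieldType) (T : finType) (w : T -> T -> R)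
    Psi a O A B C :
  is_tangle w Psi a O -> A \in O ->
  cut_cost w B <= Psi -> cut_cost w C <= Psi ->
  (#|A :&: ~: B :&: ~: C| < a)%N -> (B \in O) || (C \in O).
Proof.
move=> [[_ orient _] agree] AO costB costC small.
case/orP: (orient _ costB) => [-> //| BcO].
case/orP: (orient _ costC) => [-> | CcO]; first by rewrite orbT.
by have := leq_trans small (agree _ _ _ AO BcO CcO); rewrite ltnn.
Qed.

Lemma orientation_eq (R : realFieldType) (T : finType) (w : T -> T -> R)
    Psi (O1 O2 : {set {set T}}) :
  is_orientation w Psi O1 -> is_orientation w Psi O2 ->
  (forall A, A \in O1 -> ~: A \notin O2) ->
  (forall A, A \in O2 -> ~: A \notin O1) ->
  O1 = O2.
Proof.
move=> [cost1 orient1 _] [cost2 orient2 _] excl12 excl21.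
apply/setP => A; apply/idP/idP => AO.
- by case/orP: (orient2 _ (cost1 _ AO)) => // AcO; case/negP: (excl12 _ AO).
- by case/orP: (orient1 _ (cost2 _ AO)) => // AcO; case/negP: (excl21 _ AO).
Qed.

Lemma exists_subset_card (T : finType) (D : {set T}) n :
  (n <= #|D|)%N -> exists2 B : {set T}, B \subset D & #|B| = n.
Proof.
elim: n => [|n IH] n_le; first by exists set0; rewrite ?sub0set ?cards0.
have [B BD cardB] := IH (ltnW n_le).
have /card_gt0P [v /setDP [vD vB]] : (0 < #|D :\: B|)%N.
  by rewrite cardsDS // cardB subn_gt0.
by exists (v |: B); rewrite ?subUset ?sub1set ?vD ?BD // cardsU1 vB cardB.
Qed.

Lemma split_halves (T : finType) (D : {set T}) :
  exists B C : {set T}, [/\ B \subset D, C \subset D,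
    (2 * #|B| <= #|D|)%N, (2 * #|C| <= #|D|)%N
    & (#|D :&: ~: B :&: ~: C| <= 1)%N].
Proof.
have [B BD cardB] := exists_subset_card (leq_div #|D| 2).
have cardDB : #|D :\: B| = (#|D| - #|D| %/ 2)%N by rewrite cardsDS // cardB.
have [C CDB cardC] := exists_subset_card (leq_pred #|D :\: B|).
have CD : C \subset D := subset_trans CDB (subsetDl D B).
exists B, C; split=> //; [lia | lia |].
by rewrite -!setDE cardsDS // cardC; lia.
Qed.

Definition sbm_block_cost (R : pzRingType) (p q m d : R) : R :=
  d * (p * (m - d) + q * m).

(* The difference of the two sides is (k - j) ((p + q) m - p (k + j)), and
   k + j <= 3 k / 2 < (1 + q / p) m: this is where p < 2 q is used. *)
Lemma sbm_block_cost_le (R : realFieldType) (p q m j k : R) :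
  0 <= q -> q < p -> p < 2 * q -> 0 <= j -> 2 * j <= k -> k <= m ->
  sbm_block_cost p q m j <= sbm_block_cost p q m k.
Proof.
move=> q_ge0 q_lt_p p_lt_2q j_ge0 jk km; rewrite /sbm_block_cost -subr_ge0.
have -> : k * (p * (m - k) + q * m) - j * (p * (m - j) + q * m)
    = (k - j) * ((p + q) * m - p * (k + j)) by ring.
apply: mulr_ge0; first lra.
have : p * k <= p * m by apply: ler_wpM2l; lra.
have : p * (2 * j) <= p * k by apply: ler_wpM2l; lra.
have : 0 <= (2 * q - p) * m by apply: mulr_ge0; lra.
lra.
Qed.

(* F is the cost of a cut whose sides meet the blocks in x, y and x', y'
   vertices.  With m = x + x' = y + y', F minus the four block costs is
   y (q x' + p y' - q x), x (p x' + q y' - q y), y' (p y + q x - q x') and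
   x' (p x + q y - q y'); if one of the first two brackets is negative, the
   last two are nonnegative. *)
Lemma sbm_split_cost (R : realFieldType) (p q m x x' y y' : R) :
  0 <= q -> q < p -> 0 <= x -> 0 <= x' -> 0 <= y -> 0 <= y' ->
  m = x + x' -> m = y + y' ->
  let F := x * (p * x' + q * y') + y * (q * x' + p * y') in
  (sbm_block_cost p q m x <= F /\ sbm_block_cost p q m y <= F) \/
  (sbm_block_cost p q m x' <= F /\ sbm_block_cost p q m y' <= F).
Proof.
move=> q_ge0 q_lt_p x_ge0 x'_ge0 y_ge0 y'_ge0 mx my F.
have ey' : y' = x + x' - y by lra.
rewrite /sbm_block_cost -!(subr_ge0 _ F).
have -> : F - x * (p * (m - x) + q * m) = y * (q * x' + p * y' - q * x).
  by rewrite /F ey' mx; ring.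
have -> : F - y * (p * (m - y) + q * m) = x * (p * x' + q * y' - q * y).
  by rewrite /F ey' mx; ring.
have -> : F - x' * (p * (m - x') + q * m) = y' * (p * y + q * x - q * x').
  by rewrite /F ey' mx; ring.
have -> : F - y' * (p * (m - y') + q * m) = x' * (p * x + q * y - q * y').
  by rewrite /F ey' mx; ring.
have scale z : 0 <= z -> 0 <= q * z /\ q * z <= p * z.
  by move=> z_ge0; split; [apply: mulr_ge0 | apply: ler_wpM2r]; lra.
have [[qx px] [qx' px']] := (scale x x_ge0, scale x' x'_ge0).
have [[qy py] [qy' py']] := (scale y y_ge0, scale y' y'_ge0).
case: (lerP 0 (q * x' + p * y' - q * x)) => sx;
case: (lerP 0 (p * x' + q * y' - q * y)) => sy.
- by left; split; apply: mulr_ge0.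
all: by right; split; apply: mulr_ge0 => //; lra.
Qed.

Section TwoBlockModel.

Variables (R : realFieldType) (T : finType) (V1 : {set T}) (p q : R).

Local Notation w := (sbm_weight V1 p q).
Local Notation m := (#|V1|%:R : R).

Lemma sbm_weightC u v : w u v = w v u.
Proof. by rewrite /sbm_weight eq_sym [(v \in V1) == _]eq_sym. Qed.

Lemma sbm_weight_sum (S : {set T}) u : u \notin S ->
  \sum_(v in S) w u v =
    if u \in V1 then p * #|S :&: V1|%:R + q * #|S :\: V1|%:R
    else q * #|S :&: V1|%:R + p * #|S :\: V1|%:R.
Proof.
move=> uS; rewrite (big_setID V1).
rewrite (eq_bigr (fun=> if u \in V1 then p else q)); last first.
  move=> v /setIP [vS vV1]; rewrite /sbm_weight vV1.
  by case: eqP => [uv|]; [rewrite uv vS in uS | case: (u \in V1)].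
rewrite [X in _ + X = _](eq_bigr (fun=> if u \in V1 then q else p)); last first.
  move=> v /setDP [vS vV1]; rewrite /sbm_weight (negbTE vV1).
  by case: eqP => [uv|]; [rewrite uv vS in uS | case: (u \in V1)].
by case: (u \in V1); rewrite !sumr_const !mulr_natr.
Qed.

Lemma sbm_cut_cost A :
  cut_cost w A =
    #|A :&: V1|%:R * (p * #|~: A :&: V1|%:R + q * #|~: A :\: V1|%:R)
  + #|A :\: V1|%:R * (q * #|~: A :&: V1|%:R + p * #|~: A :\: V1|%:R).
Proof.
have AcA u : u \in A -> u \notin ~: A by rewrite inE => ->.
rewrite /cut_cost (big_setID V1) /=.
rewrite (eq_bigr (fun=> p * #|~: A :&: V1|%:R + q * #|~: A :\: V1|%:R));
  last by move=> u /setIP [uA uV1]; rewrite sbm_weight_sum ?AcA // uV1.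
rewrite [X in _ + X = _](eq_bigr
    (fun=> q * #|~: A :&: V1|%:R + p * #|~: A :\: V1|%:R));
  last by move=> u /setDP [uA uV1]; rewrite sbm_weight_sum ?AcA // (negbTE uV1).
by rewrite !sumr_const !mulr_natl.
Qed.

Lemma cut_cost_setC A : cut_cost w (~: A) = cut_cost w A.
Proof.
rewrite /cut_cost setCK exchange_big /=.
by apply: eq_bigr => u _; apply: eq_bigr => v _; rewrite sbm_weightC.
Qed.

Lemma sbm_cut_cost_swap_blocks A :
  cut_cost (sbm_weight (~: V1) p q) A = cut_cost w A.
Proof.
apply: eq_bigr => u _; apply: eq_bigr => v _.
by rewrite /sbm_weight !inE (inj_eq negb_inj).
Qed.

Lemma cut_cost_sub_block (D : {set T}) : D \subset V1 ->
  cut_cost w D = #|D|%:R * (p * (m - #|D|%:R) + q * #|~: V1|%:R).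
Proof.
move=> DV1; rewrite sbm_cut_cost (setIidPl DV1).
have -> : D :\: V1 = set0 by apply/eqP; rewrite setD_eq0.
have -> : ~: D :\: V1 = ~: V1 by rewrite setDE -setCU (setUidPr DV1).
rewrite setIC -setDE cardsDS // natrB ?subset_leq_card // cards0.
by rewrite mul0r addr0.
Qed.

End TwoBlockModel.

Section BalancedTwoBlockModel.

Variables (R : realFieldType) (T : finType) (V1 : {set T}) (p q : R).
Variables (a : nat) (Psi : R).
Hypotheses (balanced : #|V1| = #|~: V1|) (q_ge0 : 0 <= q) (q_lt_p : q < p).
Hypotheses (p_lt_2q : p < 2 * q) (a_ge2 : (2 <= a)%N).

Local Notation w := (sbm_weight V1 p q).
Local Notation m := (#|V1|%:R : R).

Definition in_block (D : {set T}) := (D \subset V1) || (D \subset ~: V1).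

Lemma in_block_sub (B D : {set T}) : B \subset D -> in_block D -> in_block B.
Proof.
by move=> BD /orP [] DV; apply/orP; [left | right]; apply: subset_trans DV.
Qed.

Lemma in_block_setI (E : {set T}) : in_block (E :&: V1).
Proof. by rewrite /in_block subsetIr. Qed.

Lemma in_block_setD (E : {set T}) : in_block (E :\: V1).
Proof. by rewrite /in_block setDE subsetIr orbT. Qed.

Lemma in_block_card (D : {set T}) : in_block D -> (#|D| <= #|V1|)%N.
Proof. by case/orP => /subset_leq_card; rewrite -?balanced. Qed.

Lemma cut_cost_block (D : {set T}) :
  in_block D -> cut_cost w D = sbm_block_cost p q m #|D|%:R.
Proof.
case/orP => DV; first by rewrite cut_cost_sub_block // -balanced.
by rewrite -sbm_cut_cost_swap_blocks cut_cost_sub_block // setCK -balanced.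
Qed.

Lemma tangle_notin_block O (D : {set T}) :
  is_tangle w Psi a O -> in_block D -> cut_cost w D <= Psi -> D \notin O.
Proof.
move=> tO; have [n] := ubnP #|D|; elim: n D => // n IH D /ltnSE D_le_n.
move=> blockD costD; apply/negP => DO.
have D_ge2 : (2 <= #|D|)%N := leq_trans a_ge2 (tangle_card_ge tO DO).
have [B [C [BD CD B_half C_half rest]]] := split_halves D.
have cost_half (E : {set T}) :
    E \subset D -> (2 * #|E| <= #|D|)%N -> cut_cost w E <= Psi.
  move=> ED E_half; apply: le_trans costD.
  rewrite !cut_cost_block ?(in_block_sub ED) //.
  apply: sbm_block_cost_le; rewrite // ?ler_nat ?in_block_card //.
  by rewrite -natrM ler_nat.
have notin (E : {set T}) : E \subset D -> (2 * #|E| <= #|D|)%N -> E \notin O.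
  move=> ED E_half; apply: IH (in_block_sub ED blockD) (cost_half E ED E_half).
  lia.
have := tangle_cover tO DO (cost_half B BD B_half) (cost_half C CD C_half)
  (leq_ltn_trans rest a_ge2).
by rewrite (negbTE (notin B BD B_half)) (negbTE (notin C CD C_half)).
Qed.

Lemma tangle_notin_of_cheap_blocks O (E : {set T}) :
  is_tangle w Psi a O ->
  cut_cost w (E :&: V1) <= cut_cost w E ->
  cut_cost w (E :\: V1) <= cut_cost w E -> E \notin O.
Proof.
move=> tO cost1 cost2; apply/negP => EO.
have [[costO _ _] _] := tO; have costE := costO E EO.
have cost1' := le_trans cost1 costE; have cost2' := le_trans cost2 costE.
have : (#|E :&: ~: (E :&: V1) :&: ~: (E :\: V1)| < a)%N.
  rewrite (_ : _ :&: _ = set0) ?cards0 ?(leq_trans _ a_ge2) //.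
  by apply/setP => u; rewrite !inE; case: (u \in E); case: (u \in V1).
move/(tangle_cover tO EO cost1' cost2').
by rewrite (negbTE (tangle_notin_block tO (in_block_setI E) cost1'))
           (negbTE (tangle_notin_block tO (in_block_setD E) cost2')).
Qed.

Lemma tangle_setC_notin O O' (A : {set T}) :
  is_tangle w Psi a O -> is_tangle w Psi a O' -> A \in O -> ~: A \notin O'.
Proof.
move=> tO tO' AO.
have split1 : m = #|A :&: V1|%:R + #|~: A :&: V1|%:R.
  by rewrite -natrD -(cardsID A V1) [V1 :&: A]setIC setDE [V1 :&: ~: A]setIC.
have split2 : m = #|A :\: V1|%:R + #|~: A :\: V1|%:R.
  by rewrite -natrD balanced -(cardsID A (~: V1)) !setDE !(setIC (~: V1)).
have := sbm_split_cost q_ge0 q_lt_p (ler0n _ _) (ler0n _ _) (ler0n _ _)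
  (ler0n _ _) split1 split2.
rewrite /= -sbm_cut_cost -!cut_cost_block ?in_block_setI ?in_block_setD //.
case=> [[cost1 cost2] | [cost1 cost2]].
- by move: AO; rewrite (negbTE (tangle_notin_of_cheap_blocks tO cost1 cost2)).
- rewrite -[cut_cost w A]cut_cost_setC in cost1 cost2.
  exact: tangle_notin_of_cheap_blocks tO' cost1 cost2.
Qed.

End BalancedTwoBlockModel.

Theorem theorem3 (R : realFieldType) (T : finType) (V1 : {set T})
  (p q : R) (a : nat) :
  #|V1| = #|~: V1| ->
  0 <= q -> q < p -> p <= 1 ->
  (2 <= a)%N -> p < 2 * q ->
  forall (Psi : R) (O1 O2 : {set {set T}}),
    is_tangle (sbm_weight V1 p q) Psi a O1 ->
    is_tangle (sbm_weight V1 p q) Psi a O2 ->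
    O1 = O2.
Proof.
move=> balanced q_ge0 q_lt_p _ a_ge2 p_lt_2q Psi O1 O2 t1 t2.
have [[o1 _] [o2 _]] := (t1, t2).
apply: (orientation_eq o1 o2) => A AO.
- exact: tangle_setC_notin t1 t2 AO.
- exact: tangle_setC_notin t2 t1 AO.
Qed.
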